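(* Let $n\ge1$, let $q=P^{+}(g(n))$ be the largest prime factor of $g(n)$, and let $(\gamma_k)_{0\le k\le \ell+1}$ be a $q$-admissible $g$-sequence of finite length $\ell\ge1$, with associated intervals $J_k$. Then for every $0\le k\le \ell$, the interval $qJ_k=\{qx: x\in J_k\}$ contains at most one prime that does not divide $g(n)$. Moreover, for every $0\le k\le \ell$ such that $\dfrac{\theta(q\gamma_{k+1})}{q}-k\dfrac{\log q}{q}>0$, \[ q\le \frac{\log g(n)}{\dfrac{\theta(q\gamma_{k+1})}{q}-k\dfrac{\log q}{q}-\dfrac{\sum_{j=1}^{k+1}\log\gamma_j}{q}}\le \frac{\log g(n)}{\dfrac{\theta(q\gamma_{k+1})}{q}-k\dfrac{\log q}{q}}. \]
   Context: $g(n)$ is the maximal order of an element of $\mathfrak S_n$, i.e. $g(n)=\max\{M\ge1:\ell(M)\le n\}$ with $\ell$ additive, $\ell(1)=0$, $\ell(p^a)=p^a$. $\theta(x)=\sum_{p\le x}\log p$ (sum over primes). Intervals $(a,b]$ are open on the left, closed on the right. A $g$-sequence of length $\ell$ is a finite sequence $(\gamma_k)_{0\le k\le\ell+1}$ with $\gamma_0=0$, $\gamma_1=1/2$ and, for $1\le k\le\ell$, $0<\gamma_k<1$ and $\gamma_k<\gamma_{k+1}<(1+\gamma_k^2)/2$. Its associated intervals are $I_0=(0,1/4]$, $J_0=(0,1/2]$ and, for $1\le k\le\ell$, $I_k=(\alpha_k,\beta_k]$, $J_k=(\gamma_k,\gamma_{k+1}]$ with $\alpha_k=2\gamma_{k+1}-1$,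 $\beta_k=\gamma_k^2$. For $y\ge12$, such a sequence is $y$-admissible if, letting $m_k$ ($1\le k\le\ell$) be the number of indices $j\in\{0,1,\dots,\ell\}$ with $I_k\cap J_j\neq\emptyset$, for every real $\lambda\ge y$ and every $1\le k\le\ell$ the interval $\lambda I_k=(\lambda\alpha_k,\lambda\beta_k]$ contains at least $m_k+1$ primes. *)

From HB Require Import structures.
From mathcomp Require Import all_boot all_order all_algebra.
From mathcomp Require Import boolp reals exp.
Set Implicit Arguments. Unset Strict Implicit. Unset Printing Implicit Defensive.
Import Order.TTheory GRing.Theory Num.Theory.
Local Open Scope ring_scope.

Definition ellL (M : nat) : nat := (\sum_(p <- primes M) p ^ logn p M)%N.

Definition is_g (n G : nat) : Prop :=
  [/\ (0 < G)%N, (ellL G <= n)%N &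
      forall M : nat, (0 < M)%N -> (ellL M <= n)%N -> (M <= G)%N].

Definition theta {R : realType} (x : R) : R :=
  \sum_(p < `|Num.floor x|%N.+1 | prime p && (p%:R <= x)) ln (p%:R : R).

Definition nprimes_in {R : realType} (a b : R) : nat :=
  count (fun p => [&& prime p, a < p%:R & p%:R <= b]) (iota 0 `|Num.floor b|%N.+1).

Definition nprimes_in_ndvd {R : realType} (N : nat) (a b : R) : nat :=
  count (fun p => [&& prime p, ~~ (p %| N)%N, a < p%:R & p%:R <= b])
        (iota 0 `|Num.floor b|%N.+1).

(* g-sequence of length l: gamma_0 .. gamma_{l+1} (values beyond l+1 are irrelevant) *)
Definition g_sequence {R : realType} (l : nat) (gamma : nat -> R) : Prop :=
  [/\ gamma 0%N = 0, gamma 1%N = 1 / 2 &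
      forall k : nat, (1 <= k <= l)%N ->
        [/\ 0 < gamma k, gamma k < 1, gamma k < gamma k.+1 &
            gamma k.+1 < (1 + gamma k ^+ 2) / 2]].

(* Associated intervals I_k = (Ilo k, Ihi k], J_k = (Jlo k, Jhi k]. *)
Definition Ilo {R : realType} (gamma : nat -> R) (k : nat) : R :=
  if k == 0%N then 0 else 2 * gamma k.+1 - 1.
Definition Ihi {R : realType} (gamma : nat -> R) (k : nat) : R :=
  if k == 0%N then 1 / 4 else gamma k ^+ 2.
Definition Jlo {R : realType} (gamma : nat -> R) (k : nat) : R :=
  if k == 0%N then 0 else gamma k.
Definition Jhi {R : realType} (gamma : nat -> R) (k : nat) : R :=
  if k == 0%N then 1 / 2 else gamma k.+1.

Definition m_count {R : realType} (l : nat) (gamma : nat -> R) (k : nat) : nat :=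
  count (fun j => `[< exists x : R,
                       (Ilo gamma k < x <= Ihi gamma k) /\ (Jlo gamma j < x <= Jhi gamma j) >])
        (iota 0 l.+1).

Definition admissible {R : realType} (y : R) (l : nat) (gamma : nat -> R) : Prop :=
  12 <= y /\
  forall (lam : R) (k : nat), y <= lam -> (1 <= k <= l)%N ->
    (m_count l gamma k < nprimes_in (lam * Ilo gamma k) (lam * Ihi gamma k))%N.

(* Two primes [p1 < p2] not
   dividing [G] in the same [q J_k] would contradict the maximality of [G]: for
   [k = 0] some powers with [p1^a + p2^b <= q < p1^a p2^b] can replace the factor
   [q]; for [k >= 1], admissibility together with the statement for the [J_j]
   meeting [I_k] provides a prime [Q] dividing [G] in [q I_k], and [p1 p2] can
   replace [q Q] since [p1 + p2 <= q + Q] while [p1 p2 > q Q].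
   Then [theta (q gamma_(k+1))] splits into the primes dividing [G], whose product
   with [q] divides [G], and the others, at most one in each of
   [q J_0, ..., q J_k]; this gives
   [theta (q gamma_(k+1)) <= log G + k log q + sum_(j <= k+1) log gamma_j],
   which is the bound on [q] after division by [q]. *)
From HB Require Import structures.
From mathcomp Require Import all_boot all_order all_algebra.
From mathcomp Require Import boolp reals exp.
From mathcomp Require Import zify ring lra.
Set Implicit Arguments. Unset Strict Implicit. Unset Printing Implicit Defensive.
Import Order.TTheory GRing.Theory Num.Theory.

Lemma ellL_mul_pfactor N p c : prime p -> ~~ (p %| N) -> 0 < N -> 0 < c ->
  ellL (N * p ^ c) = ellL N + p ^ c.
Proof.
move=> p_pr pNN N_gt0 c_gt0; rewrite /ellL.
have pc_gt0 : 0 < p ^ c by rewrite expn_gt0 prime_gt0.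
have primesNp : perm_eq (primes (N * p ^ c)) (p :: primes N).
  apply: uniq_perm; first exact: primes_uniq.
    by rewrite /= mem_primes p_pr N_gt0 pNN primes_uniq.
  by move=> r; rewrite primesM // primesX // (primes_prime p_pr) !inE orbC.
rewrite (perm_big _ primesNp) big_cons /= addnC; congr addn; last first.
  by rewrite lognM // logn_coprime ?prime_coprime // pfactorK.
apply: eq_big_seq => r; rewrite mem_primes => /and3P[r_pr _ rN].
have rp : r != p by apply: contraNneq pNN => <-.
by rewrite lognM // lognX (logn_prime r p_pr) (negbTE rp) muln0 addn0.
Qed.

Lemma ellL_divn_prime r G : prime r -> r %| G -> 0 < G ->
  ellL (G %/ r) + r <= ellL G.
Proof.
move=> r_pr rG G_gt0; have [m cop_rm Gm] := pfactor_coprime r_pr G_gt0.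
have m_gt0 : 0 < m by move: G_gt0; rewrite Gm muln_gt0 => /andP[].
have rNm : ~~ (r %| m) by rewrite -prime_coprime.
have r_gt1 := prime_gt1 r_pr.
have : 0 < logn r G by rewrite logn_gt0 mem_primes r_pr G_gt0.
move: Gm; case: (logn r G) => [|[|e]] // -> _.
  by rewrite ellL_mul_pfactor // expn1 mulnK ?prime_gt0.
rewrite expnSr mulnA mulnK ?prime_gt0 // -mulnA -expnSr !ellL_mul_pfactor //.
rewrite -addnA leq_add2l (expnS r e.+1).
have re_ge_r : r <= r ^ e.+1.
  by rewrite -{1}[r]expn1; apply: leq_pexp2l (prime_gt0 r_pr) _.
nia.
Qed.

Lemma is_g_exchange n G N d p1 p2 a b : is_g n G -> G = N * d ->
  prime p1 -> prime p2 -> p1 != p2 -> ~~ (p1 %| G) -> ~~ (p2 %| G) ->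
  0 < a -> 0 < b -> ellL N + (p1 ^ a + p2 ^ b) <= ellL G ->
  p1 ^ a * p2 ^ b <= d.
Proof.
move=> [G_gt0 GLn G_max] GNd p1_pr p2_pr p12 p1NG p2NG a_gt0 b_gt0 ellLM.
have N_gt0 : 0 < N by move: G_gt0; rewrite GNd muln_gt0 => /andP[].
have NG : N %| G by rewrite GNd dvdn_mulr.
have p1NN : ~~ (p1 %| N) by apply: contra p1NG => /dvdn_trans; apply.
have p2NNp1 : ~~ (p2 %| N * p1 ^ a).
  rewrite Euclid_dvdM // Euclid_dvdX // (dvdn_prime2 p2_pr p1_pr) eq_sym (negbTE p12).
  by rewrite orbF; apply: contra p2NG => /dvdn_trans; apply.
have Np1_gt0 : 0 < N * p1 ^ a by rewrite muln_gt0 N_gt0 expn_gt0 prime_gt0.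
have M_gt0 : 0 < N * p1 ^ a * p2 ^ b by rewrite muln_gt0 Np1_gt0 expn_gt0 prime_gt0.
have ellL_M : ellL (N * p1 ^ a * p2 ^ b) = ellL N + (p1 ^ a + p2 ^ b).
  by rewrite !ellL_mul_pfactor // addnA.
have := G_max _ M_gt0 (leq_trans (eq_leq ellL_M) (leq_trans ellLM GLn)).
by rewrite GNd -mulnA leq_pmul2l.
Qed.

Lemma is_g_exchange1 n G q p1 p2 a b : is_g n G -> prime q -> q %| G ->
  prime p1 -> prime p2 -> p1 != p2 -> ~~ (p1 %| G) -> ~~ (p2 %| G) ->
  0 < a -> 0 < b -> p1 ^ a + p2 ^ b <= q -> p1 ^ a * p2 ^ b <= q.
Proof.
move=> gG q_pr qG p1_pr p2_pr p12 p1NG p2NG a_gt0 b_gt0 sum_le.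
have [G_gt0 _ _] := gG.
apply: (is_g_exchange gG (esym (divnK qG))) => //.
by have := ellL_divn_prime q_pr qG G_gt0; lia.
Qed.

Lemma is_g_exchange2 n G q Q p1 p2 : is_g n G ->
  prime q -> prime Q -> q != Q -> q %| G -> Q %| G ->
  prime p1 -> prime p2 -> p1 != p2 -> ~~ (p1 %| G) -> ~~ (p2 %| G) ->
  p1 + p2 <= q + Q -> p1 * p2 <= q * Q.
Proof.
move=> gG q_pr Q_pr qQ qG QG p1_pr p2_pr p12 p1NG p2NG sum_le.
have [G_gt0 _ _] := gG.
have QGq : Q %| G %/ q.
  move: QG; rewrite -{1}(divnK qG) Euclid_dvdM // (dvdn_prime2 Q_pr q_pr).
  by rewrite eq_sym (negbTE qQ) orbF.
have Gq_gt0 : 0 < G %/ q by rewrite divn_gt0 ?prime_gt0 // dvdn_leq.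
have GqQ : G = G %/ q %/ Q * (q * Q) by rewrite (mulnC q) mulnA !divnK.
rewrite -[p1]expn1 -[p2]expn1; apply: (is_g_exchange gG GqQ) => //.
have := ellL_divn_prime q_pr qG G_gt0; have := ellL_divn_prime Q_pr QGq Gq_gt0.
rewrite !expn1 => ellN2 ellN1; apply: leq_trans _ ellN1.
by apply: leq_trans _ (leq_add ellN2 (leqnn q)); rewrite -addnA leq_add2l (addnC Q).
Qed.

Lemma expn_eq_or_ge_sq p a : 0 < a -> p ^ a = p \/ p * p <= p ^ a.
Proof.
case: a => [|[|a]] // _; first by left; rewrite expn1.
by right; rewrite mulnn; case: p => // p; apply: leq_pexp2l.
Qed.

(* Take the largest admissible powers [p1 ^ a <= q - p2] and [p2 ^ b <= q - p1]:
   if neither [(a, 1)] nor [(1, b)] works, both powers are the primes themselves,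
   which forces [p2 = p1 + 1], i.e. [(p1, p2) = (2, 3)], and then [q < 11]. *)
Lemma pfactors_sum_le_prod_gt p1 p2 q : prime p1 -> prime p2 -> p1 < p2 ->
  2 * p2 <= q -> 11 <= q ->
  exists a b, [/\ 0 < a, 0 < b, p1 ^ a + p2 ^ b <= q & q < p1 ^ a * p2 ^ b].
Proof.
move=> p1_pr p2_pr p12 p2_le q_ge11.
have p1_gt1 := prime_gt1 p1_pr; have p2_gt1 := prime_gt1 p2_pr.
set a := trunc_log p1 (q - p2); set b := trunc_log p2 (q - p1).
have a_gt0 : 0 < a by apply: (@trunc_log_max p1 (q - p2) 1); rewrite ?expn1; lia.
have b_gt0 : 0 < b by apply: (@trunc_log_max p2 (q - p1) 1); rewrite ?expn1; lia.
have a_le : p1 ^ a <= q - p2 by apply: trunc_logP; lia.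
have a_gt : q - p2 < p1 ^ a * p1 by rewrite -expnSr; apply: trunc_log_ltn.
have b_le : p2 ^ b <= q - p1 by apply: trunc_logP; lia.
have b_gt : q - p1 < p2 ^ b * p2 by rewrite -expnSr; apply: trunc_log_ltn.
have [q_lt|q_ge] := ltnP q (p1 ^ a * p2).
  by exists a, 1; rewrite expn1; split => //; lia.
have [q_lt'|q_ge'] := ltnP q (p1 * p2 ^ b).
  by exists 1, b; rewrite expn1; split => //; lia.
exfalso.
have := expn_eq_or_ge_sq p1 a_gt0; have := expn_eq_or_ge_sq p2 b_gt0.
move: (p1 ^ a) (p2 ^ b) a_le a_gt b_le b_gt q_ge q_ge' => x y.
move=> x_le x_gt y_le y_gt q_ge q_ge' y_cases x_cases.
have p2_lt : p2 < 2 * p1 by nia.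
have q_lt : q < p2 * p2 by nia.
have x_eq : x = p1 by case: x_cases => // x_ge; nia.
have y_eq : y = p2 by case: y_cases => // y_ge; nia.
subst x y; have p2_eq : p2 = p1.+1 by nia.
have p1_eq : p1 = 2.
  case: (even_prime p1_pr) => // p1_odd; case: (even_prime p2_pr) => [|p2_odd].
    by lia.
  by move: p2_odd; rewrite p2_eq /= p1_odd.
lia.
Qed.

Lemma sorted_ltn_count_gt1 (a : pred nat) (s : seq nat) :
  sorted ltn s -> 1 < count a s -> exists p1 p2, [/\ p1 < p2, a p1 & a p2].
Proof.
move=> s_sorted; rewrite -size_filter.
have : sorted ltn (filter a s) by apply: sorted_filter => //; exact: ltn_trans.
have : {subset filter a s <= a} by move=> x; rewrite mem_filter => /andP[].
case: (filter a s) => [|x [|y t]] //= sub_a /andP[xy _] _.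
by exists x, y; split => //; apply: sub_a; rewrite !inE eqxx ?orbT.
Qed.

Lemma sub_count_iota (a b : pred nat) N M : subpred a b ->
  (forall p, a p -> p < M) -> count a (iota 0 N) <= count b (iota 0 M).
Proof.
move=> ab a_lt; apply: (@leq_trans (count a (iota 0 (M + N)))).
  by rewrite addnC iotaD count_cat leq_addr.
rewrite iotaD count_cat add0n -[X in _ <= X]addn0 leq_add ?sub_count //.
rewrite leqn0 eqn0Ngt -has_count; apply/hasPn => x; rewrite mem_iota => /andP[Mx _].
by apply: contraL Mx => /a_lt; rewrite -ltnNge.
Qed.

Lemma count_le_sum_cover (a : pred nat) (b : nat -> pred nat) (js s : seq nat) :
  uniq js -> (forall x, x \in s -> a x -> exists2 j, j \in js & b j x) ->
  count a s <= \sum_(j <- js) count (b j) s.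
Proof.
move=> js_uniq cover.
have -> : \sum_(j <- js) count (b j) s = \sum_(x <- s) \sum_(j <- js) b j x.
  by rewrite exchange_big /=; apply: eq_bigr => j _; rewrite -sum1_count big_mkcond.
rewrite -sum1_count big_mkcond /= big_seq [X in _ <= X]big_seq.
apply: leq_sum => x xs; case ax: (a x) => //.
have [j jjs bjx] := cover x xs ax.
by rewrite (bigD1_seq j) //= bjx.
Qed.

Lemma prod_uniq_primes_dvdn (s : seq nat) N : uniq s ->
  (forall p, p \in s -> prime p && (p %| N)) -> \prod_(p <- s) p %| N.
Proof.
elim: s => [|p s IHs] /=; first by rewrite big_nil dvd1n.
move=> /andP[ps s_uniq] s_dvd; rewrite big_cons.
have /andP[p_pr pN] := s_dvd p (mem_head _ _).
have cop : coprime p (\prod_(r <- s) r).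
  rewrite big_seq; apply: (big_ind (coprime p)) => [|u v pu pv|r rs].
  - exact: coprimen1.
  - by rewrite coprimeMr pu pv.
  have /andP[r_pr _] := s_dvd r (mem_behead (s := p :: s) rs).
  by rewrite prime_coprime // dvdn_prime2 //; apply: contraNneq ps => ->.
by rewrite Gauss_dvd // pN IHs // => r rs; apply: s_dvd; rewrite inE rs orbT.
Qed.

Local Open Scope ring_scope.

Lemma lt_absz_floorS (R : realType) (x : R) (p : nat) :
  p%:R <= x -> (p < `|Num.floor x|.+1)%N.
Proof.
move=> p_le; have : p%:Z <= Num.floor x by rewrite floor_ge_int.
rewrite ltnS; lia.
Qed.

Lemma ln_prod (R : realType) (I : Type) (s : seq I) (P : pred I) (f : I -> R) :
  (forall i, P i -> 0 < f i) ->
  ln (\prod_(i <- s | P i) f i) = \sum_(i <- s | P i) ln (f i).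
Proof.
move=> f_gt0; elim: s => [|i s IHs]; first by rewrite !big_nil ln1.
rewrite !big_cons; case: ifP => // Pi.
by rewrite lnM ?IHs // posrE ?f_gt0 // prodr_gt0.
Qed.

Lemma ler_sum_count (R : numDomainType) (I : Type) (s : seq I) (P : pred I)
    (f : I -> R) (c : R) :
  (forall i, P i -> f i <= c) -> \sum_(i <- s | P i) f i <= (count P s)%:R * c.
Proof.
move=> f_le; elim: s => [|i s IHs]; first by rewrite big_nil mul0r.
rewrite big_cons /=; case: ifP => Pi; last by rewrite add0n.
by rewrite natrD mulrDl mul1r lerD // f_le.
Qed.

Lemma nprimes_in_ndvd_gt1 (R : realType) N (a b : R) :
  (1 < nprimes_in_ndvd N a b)%N ->
  exists p1 p2, [/\ (p1 < p2)%N,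
    [&& prime p1, ~~ (p1 %| N)%N, a < p1%:R & p1%:R <= b] &
    [&& prime p2, ~~ (p2 %| N)%N, a < p2%:R & p2%:R <= b]].
Proof. exact/sorted_ltn_count_gt1/iota_ltn_sorted. Qed.

Lemma theta_split_dvdn (R : realType) (N : nat) (x : R) :
  let s := iota 0 `|Num.floor x|.+1 in
  theta x = \sum_(p <- s | [&& prime p, (p %| N)%N & p%:R <= x]) ln (p%:R : R)
          + \sum_(p <- s | [&& prime p, ~~ (p %| N)%N & p%:R <= x]) ln (p%:R : R).
Proof.
rewrite /theta -(big_mkord (fun p => prime p && (p%:R <= x)) (fun p => ln (p%:R : R))).
rewrite /index_iota subn0 (bigID (fun p => p %| N)%N) /=.
by congr (_ + _); apply: eq_bigl => p; rewrite -andbA (andbC (_ <= _)).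
Qed.

Section GSequence.
Variables (R : realType) (l : nat) (gamma : nat -> R).
Hypothesis gs : g_sequence l gamma.

Lemma g_sequence_gt0_lt1 j : (1 <= j <= l.+1)%N -> 0 < gamma j < 1.
Proof.
have [_ g1 gk] := gs; case/andP=> j_ge1; rewrite leq_eqVlt => /orP[/eqP ->|jl].
  case: (posnP l) => [->|l_gt0]; first by rewrite g1; apply/andP; split; lra.
  have [g_gt0 g_lt1 g_lt gS_lt] := gk l (introT andP (conj l_gt0 (leqnn l))).
  apply/andP; split; first lra.
  by apply: (lt_le_trans gS_lt); rewrite ler_pdivrMr //; nra.
by have [-> -> _ _] := gk j (introT andP (conj j_ge1 (ltnSE jl))).
Qed.

Lemma g_sequence_ge_half j : (1 <= j <= l.+1)%N -> 1 / 2 <= gamma j.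
Proof.
have [_ g1 gk] := gs; elim: j => [//|j IHj] /andP[_ jl].
case: (posnP j) => [->|j_gt0]; first by rewrite g1.
have [_ _ g_lt _] := gk j (introT andP (conj j_gt0 jl)).
by apply: le_trans (ltW g_lt); apply: IHj; rewrite j_gt0 ltnW.
Qed.

Lemma Jhi_g_sequence j : Jhi gamma j = gamma j.+1.
Proof. by have [_ g1 _] := gs; rewrite /Jhi; case: eqP => // ->. Qed.

Lemma g_sequence_cover K x : (1 <= K <= l.+1)%N -> 0 < x -> x <= gamma K ->
  exists2 j, (j < K)%N & Jlo gamma j < x <= Jhi gamma j.
Proof.
have [_ g1 _] := gs; elim: K => [//|K IHK] /andP[_ Kl] x_gt0 x_le.
case: (posnP K) => [K0|K_gt0].
  by exists 0%N; rewrite // /Jlo /Jhi /= x_gt0 -g1 -K0.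
case: (lerP x (gamma K)) => [x_leK|x_gtK].
  have [j jK xJ] := IHK (introT andP (conj K_gt0 (ltnW Kl))) x_gt0 x_leK.
  by exists j => //; apply: ltnW.
by exists K; rewrite // Jhi_g_sequence /Jlo gtn_eqF // x_gtK.
Qed.

Lemma sum_ln_g_sequence_le0 k : (k <= l)%N -> \sum_(1 <= j < k.+2) ln (gamma j) <= 0.
Proof.
move=> kl; rewrite big_nat_cond; apply: sumr_le0 => j /andP[/andP[j_ge1 jk] _].
have jl : (j <= l.+1)%N by rewrite -ltnS (leq_trans jk).
have /andP[_ gj_lt1] := g_sequence_gt0_lt1 (introT andP (conj j_ge1 jl)).
exact/ln_le0/ltW.
Qed.

End GSequence.

Section MaximalOrder.
Variables (R : realType) (n G l : nat) (gamma : nat -> R).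
Hypotheses (gG : is_g n G) (gs : g_sequence l gamma)
  (adm : admissible (max_pdiv G)%:R l gamma).

Let q := max_pdiv G.

Let q_ge12 : (12 <= q)%N.
Proof. by have [q_ge12 _] := adm; rewrite -(ler_nat R). Qed.

Let q_prime : prime q.
Proof.
apply: max_pdiv_prime; have [G_gt0 _ _] := gG; rewrite ltn_neqAle G_gt0 andbT.
by apply/eqP => G1; move: q_ge12; rewrite /q -G1.
Qed.

Let q_gt0 : 0 < q%:R :> R.
Proof. by rewrite ltr0n prime_gt0. Qed.

Let inJ j (p : nat) :=
  [&& prime p, ~~ (p %| G)%N, q%:R * Jlo gamma j < p%:R & p%:R <= q%:R * Jhi gamma j].

Lemma nprimes_ndvd_J0_le1 :
  (nprimes_in_ndvd G (q%:R * Jlo gamma 0) (q%:R * Jhi gamma 0) <= 1)%N.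
Proof.
rewrite leqNgt; apply/negP => /nprimes_in_ndvd_gt1.
move=> [p1 [p2 [p12 /and4P[p1_pr p1NG _ _] /and4P[p2_pr p2NG _ p2_le]]]].
have p2_le_half : (2 * p2 <= q)%N by rewrite -(ler_nat R) natrM; rewrite /Jhi /= in p2_le; lra.
have [a [b [a_gt0 b_gt0 sum_le prod_gt]]] :=
  pfactors_sum_le_prod_gt p1_pr p2_pr p12 p2_le_half (ltnW q_ge12).
have := is_g_exchange1 gG q_prime (max_pdiv_dvd G) p1_pr p2_pr (negbT (ltn_eqF p12))
  p1NG p2NG a_gt0 b_gt0 sum_le.
by rewrite leqNgt prod_gt.
Qed.

Section Induction.
Variable k : nat.
Hypotheses (k_gt0 : (0 < k)%N) (kl : (k <= l)%N)
  (IHk : forall j, (j < k)%N ->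
     (nprimes_in_ndvd G (q%:R * Jlo gamma j) (q%:R * Jhi gamma j) <= 1)%N).

Let meets j := `[< exists x : R,
  (Ilo gamma k < x <= Ihi gamma k) /\ (Jlo gamma j < x <= Jhi gamma j) >].

(* A prime of [q I_k] lies in [q (0, gamma_k]], hence in some [q J_j] with
   [j < k] and [I_k] meeting [J_j]; each such [q J_j] holds at most one. *)
Lemma nprimes_ndvd_I_le_m_count :
  (nprimes_in_ndvd G (q%:R * Ilo gamma k) (q%:R * Ihi gamma k) <= m_count l gamma k)%N.
Proof.
have [gk_gt0 gk_lt1] := andP (g_sequence_gt0_lt1 gs (introT andP (conj k_gt0 (leqW kl)))).
pose cover j p := [&& (j < k)%N, meets j & inJ j p].
apply: leq_trans (count_le_sum_cover (b := cover) (iota_uniq 0 l.+1) _) _.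
  move=> p _ /and4P[p_pr pNG p_gt p_le].
  have x_gt0 : 0 < p%:R / q%:R :> R by rewrite divr_gt0 // ltr0n prime_gt0.
  have x_le : p%:R / q%:R <= gamma k.
    rewrite ler_pdivrMr // mulrC (le_trans p_le) // /Ihi gtn_eqF // ler_pM2l //.
    by nra.
  have [j jk xJ] := g_sequence_cover gs (introT andP (conj k_gt0 (leqW kl))) x_gt0 x_le.
  exists j; first by rewrite mem_iota add0n (leq_trans jk (leqW kl)).
  move: (xJ); rewrite ltr_pdivlMr // ler_pdivrMr // ![_ * q%:R]mulrC => /andP[pJ_gt pJ_le].
  rewrite /cover jk /inJ p_pr pNG pJ_gt pJ_le !andbT; apply/asboolP.
  exists (p%:R / q%:R); split => //.
  by rewrite ltr_pdivlMr // ler_pdivrMr // ![_ * q%:R]mulrC p_gt p_le.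
rewrite /m_count -sum1_count [X in (_ <= X)%N]big_mkcond; apply: leq_sum => j _.
case: (boolP ((j < k)%N && meets j)) => [/andP[jk Ej]|not_cover]; last first.
  rewrite (@eq_count _ _ pred0) ?count_pred0 // => p.
  by rewrite /cover andbA (negbTE not_cover).
rewrite -/(meets j) Ej; apply: leq_trans (IHk jk).
apply: sub_count_iota => p /and3P[_ _ pJ] //.
by case/and4P: pJ => _ _ _ /lt_absz_floorS.
Qed.

Lemma exists_prime_dvd_I : exists Q, [&& prime Q, (Q %| G)%N,
  q%:R * Ilo gamma k < Q%:R & Q%:R <= q%:R * Ihi gamma k].
Proof.
have [_ adm_k] := adm; have := adm_k q%:R k (lexx _) (introT andP (conj k_gt0 kl)).
rewrite ltnNge; apply: contraNP => noQ; apply: leq_trans nprimes_ndvd_I_le_m_count.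
apply: sub_count => p /and3P[p_pr p_gt p_le]; rewrite /= p_pr p_gt p_le !andbT.
by apply/negP => pG; apply: noQ; exists p; rewrite p_pr pG p_gt p_le.
Qed.

Lemma nprimes_ndvd_J_le1_step :
  (nprimes_in_ndvd G (q%:R * Jlo gamma k) (q%:R * Jhi gamma k) <= 1)%N.
Proof.
rewrite leqNgt; apply/negP => /nprimes_in_ndvd_gt1.
move=> [p1 [p2 [p12 /and4P[p1_pr p1NG p1_gt p1_le] /and4P[p2_pr p2NG p2_gt p2_le]]]].
have [Q /and4P[Q_pr QG Q_gt Q_le]] := exists_prime_dvd_I.
have [gk_gt0 gk_lt1] := andP (g_sequence_gt0_lt1 gs (introT andP (conj k_gt0 (leqW kl)))).
have [gk1_gt0 gk1_lt1] := andP (g_sequence_gt0_lt1 gs (introT andP (conj (ltn0Sn k) kl))).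
rewrite /Jlo /Ilo /Ihi gtn_eqF // (Jhi_g_sequence gs) in p1_gt p1_le p2_gt p2_le Q_gt Q_le.
have qQ : q != Q.
  apply/eqP => qQ; rewrite -qQ in Q_le.
  have : q%:R * gamma k ^+ 2 < q%:R :> R by rewrite -[X in _ < X]mulr1 ltr_pM2l //; nra.
  by rewrite ltNge Q_le.
have sum_le : (p1 + p2 <= q + Q)%N by rewrite -(ler_nat R) !natrD; nra.
have prod_gt : (q * Q < p1 * p2)%N.
  rewrite -(ltr_nat R) !natrM; apply: le_lt_trans (_ : (q%:R * gamma k) ^+ 2 < _).
    by rewrite exprMn expr2 -mulrA ler_pM2l.
  by rewrite expr2 ltr_pM // mulr_ge0 // ltW.
have := is_g_exchange2 gG q_prime Q_pr qQ (max_pdiv_dvd G) QG p1_pr p2_pr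
  (negbT (ltn_eqF p12)) p1NG p2NG sum_le.
by rewrite leqNgt prod_gt.
Qed.

End Induction.

Lemma nprimes_ndvd_J_le1 k : (k <= l)%N ->
  (nprimes_in_ndvd G (q%:R * Jlo gamma k) (q%:R * Jhi gamma k) <= 1)%N.
Proof.
elim/ltn_ind: k => -[_ _|k IHk kl]; first exact: nprimes_ndvd_J0_le1.
apply: nprimes_ndvd_J_le1_step => // j jk; apply: IHk => //.
exact: leq_trans (ltnW jk) kl.
Qed.

Lemma sum_ln_inJ_le N j : (j <= l)%N ->
  \sum_(p <- iota 0 N | inJ j p) ln (p%:R : R) <= ln (q%:R * gamma j.+1).
Proof.
move=> jl; have gj_ge_half : 1 / 2 <= gamma j.+1.
  by apply: (g_sequence_ge_half gs); rewrite ltnS.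
have qgj_ge1 : 1 <= q%:R * gamma j.+1.
  have q_ge12R : 12 <= q%:R :> R by rewrite ler_nat.
  nra.
apply: le_trans (ler_sum_count _ (c := ln (q%:R * gamma j.+1)) _) _.
  move=> p /and4P[p_pr _ _ p_le]; rewrite ler_ln ?posrE ?ltr0n ?prime_gt0 //.
    by rewrite -(Jhi_g_sequence gs).
  exact: lt_le_trans ltr01 qgj_ge1.
rewrite -[X in _ <= X]mul1r ler_wpM2r ?ln_ge0 // lern1.
apply: leq_trans (nprimes_ndvd_J_le1 jl).
by apply: sub_count_iota => // p /and4P[_ _ _ /lt_absz_floorS].
Qed.

(* [(0, gamma_(k+1)] = J_0 \/ ... \/ J_k], and each [q J_j] carries at most one
   prime not dividing [G]. *)
Lemma sum_ln_primes_ndvd_le N k : (k <= l)%N ->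
  \sum_(p <- iota 0 N | [&& prime p, ~~ (p %| G)%N & p%:R <= q%:R * gamma k.+1])
     ln (p%:R : R) <= \sum_(j < k.+1) ln (q%:R * gamma j.+1).
Proof.
have [_ g1 gk] := gs; elim: k => [_|k IHk kl].
  rewrite big_ord1 (eq_bigl (inJ 0)) ?sum_ln_inJ_le // => p.
  rewrite /inJ /Jlo /Jhi /= g1 mulr0.
  by case: (boolP (prime p)) => //= p_pr; rewrite ltr0n prime_gt0.
have [_ _ gk_lt _] := gk k.+1 (introT andP (conj (ltn0Sn k) kl)).
rewrite big_ord_recr (bigID (fun p => p%:R <= q%:R * gamma k.+1)) /=; apply: lerD.
  rewrite (eq_bigl (fun p => [&& prime p, ~~ (p %| G)%N & p%:R <= q%:R * gamma k.+1])).
    exact: IHk (ltnW kl).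
  move=> p; case: (boolP (p%:R <= q%:R * gamma k.+1)) => p_le; last by rewrite !andbF.
  have -> : p%:R <= q%:R * gamma k.+2 by rewrite (le_trans p_le) // ler_pM2l // ltW.
  by rewrite !andbT.
rewrite (eq_bigl (inJ k.+1)) ?sum_ln_inJ_le // => p.
by rewrite /inJ (Jhi_g_sequence gs) /Jlo /= -ltNge -!andbA (andbC (_ <= _)).
Qed.

Lemma sum_ln_primes_dvd_le (s : seq nat) (x : R) : uniq s -> x < q%:R ->
  \sum_(p <- s | [&& prime p, (p %| G)%N & p%:R <= x]) ln (p%:R : R)
    <= ln G%:R - ln q%:R.
Proof.
move=> s_uniq x_lt_q; pose P p := [&& prime p, (p %| G)%N & p%:R <= x].
have P_gt0 p : P p -> (0 < p)%N by case/andP=> /prime_gt0.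
have prod_dvd : (q * \prod_(p <- s | P p) p %| G)%N.
  have := @prod_uniq_primes_dvdn (q :: filter P s) G; rewrite big_cons big_filter; apply.
    by rewrite /= filter_uniq // mem_filter /P lt_geF ?andbF.
  move=> p; rewrite inE mem_filter => /orP[/eqP ->|/andP[/and3P[-> -> _] _]] //.
  by rewrite q_prime max_pdiv_dvd.
have prod_gt0 : (0 < \prod_(p <- s | P p) p)%N by apply: prodn_cond_gt0.
have qprod_gt0 : (0 < q * \prod_(p <- s | P p) p)%N by rewrite muln_gt0 prime_gt0.
have [G_gt0 _ _] := gG.
rewrite lerBrDl -(ln_prod _ (f := fun p => p%:R)) => [|p /P_gt0]; last by rewrite ltr0n.
rewrite -natr_prod -lnM ?posrE ?ltr0n ?prod_gt0 ?(prime_gt0 q_prime) // -[q%:R * _]natrM.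
by rewrite ler_ln ?posrE ?ltr0n // ler_nat dvdn_leq.
Qed.

Lemma theta_le k : (k <= l)%N ->
  theta (q%:R * gamma k.+1)
    <= ln G%:R + k%:R * ln q%:R + \sum_(1 <= j < k.+2) ln (gamma j).
Proof.
move=> kl.
have g_gt0 j : (j <= k)%N -> 0 < gamma j.+1.
  by move=> jk; have /andP[] := g_sequence_gt0_lt1 gs (j := j.+1) (leq_trans jk kl).
have [_ gk1_lt1] := andP (g_sequence_gt0_lt1 gs (introT andP (conj (ltn0Sn k) kl))).
have x_lt_q : q%:R * gamma k.+1 < q%:R by rewrite -[X in _ < X]mulr1 ltr_pM2l.
rewrite (theta_split_dvdn G).
apply: le_trans (lerD (sum_ln_primes_dvd_le (iota_uniq _ _) x_lt_q)
                      (sum_ln_primes_ndvd_le _ kl)) _.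
have -> : \sum_(j < k.+1) ln (q%:R * gamma j.+1)
          = k.+1%:R * ln q%:R + \sum_(1 <= j < k.+2) ln (gamma j).
  transitivity (\sum_(j < k.+1) (ln (q%:R : R) + ln (gamma j.+1))).
    by apply: eq_bigr => j _; rewrite lnM // posrE (g_gt0 _ (ltn_ord j)).
  by rewrite big_split /= sumr_const card_ord mulr_natl big_add1 /= big_mkord.
by rewrite -natr1 mulrDl mul1r; lra.
Qed.

End MaximalOrder.

Theorem proposition2 (R : realType) (n G : nat) (l : nat) (gamma : nat -> R) :
  (1 <= n)%N -> is_g n G -> (1 <= l)%N -> g_sequence l gamma ->
  admissible ((max_pdiv G)%:R) l gamma ->
  let q : nat := max_pdiv G in
  (forall k : nat, (k <= l)%N ->
     (nprimes_in_ndvd G (q%:R * Jlo gamma k) (q%:R * Jhi gamma k) <= 1)%N) /\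
  (forall k : nat, (k <= l)%N ->
     let D : R := theta (q%:R * gamma k.+1) / q%:R - k%:R * ln (q%:R : R) / q%:R in
     0 < D ->
     q%:R <= ln (G%:R : R) / (D - (\sum_(1 <= j < k.+2) ln (gamma j)) / q%:R) /\
     ln (G%:R : R) / (D - (\sum_(1 <= j < k.+2) ln (gamma j)) / q%:R)
       <= ln (G%:R : R) / D).
Proof.
move=> _ gG _ gs adm q; split => [k kl|k kl D D_gt0].
  by rewrite /q; exact: (nprimes_ndvd_J_le1 gG gs adm kl).
have theta_bound := theta_le gG gs adm kl.
have S_le0 := sum_ln_g_sequence_le0 gs kl.
set S := \sum_(1 <= j < k.+2) ln (gamma j) in theta_bound S_le0 *.
have q_gt0 : 0 < q%:R :> R by have [q_ge12 _] := adm; apply: lt_le_trans q_ge12.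
have lnG_ge0 : 0 <= ln (G%:R : R) by have [G_gt0 _ _] := gG; rewrite ln_ge0 // ler1n.
have Sq_le0 : S / q%:R <= 0 by rewrite pmulr_lle0 ?invr_gt0.
have qD : q%:R * D = theta (q%:R * gamma k.+1) - k%:R * ln q%:R.
  by rewrite /D; field; rewrite lt0r_neq0.
have DS_gt0 : 0 < D - S / q%:R by lra.
split; last by rewrite ler_wpM2l // lef_pV2 ?posrE; lra.
by rewrite ler_pdivlMr // mulrBr qD mulrCA divff ?mulr1 ?lt0r_neq0 //; lra.
Qed.
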